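(* Let $h\geq 3$. If there exists a $(K_2,S(C_h))$-URD$(v;r,s)$ with $s>0$, then $v\equiv 0\pmod{2h}$ and $s\equiv 0\pmod 2$.
   Context: For $h\geq 3$, an $h$-sun is the graph on $2h$ distinct vertices $a_1,\ldots,a_h,b_1,\ldots,b_h$ consisting of the $h$-cycle $(a_1,a_2,\ldots,a_h)$ together with the edges $\{a_i,b_i\}$, $i=1,\ldots,h$. A $(K_2,S(C_h))$-URD$(v;r,s)$ is a partition of the edge set of the complete graph $K_v$ into $r$ classes each of which is a 1-factor (perfect matching) of $K_v$, and $s$ classes each of which is a set of vertex-disjoint $h$-suns covering every vertex of $K_v$ exactly once. *)

From mathcomp Require Import all_boot.
Set Implicit Arguments. Unset Strict Implicit. Unset Printing Implicit Defensive.

Definition edgesK (v : nat) : {set {set 'I_v}} := [set e : {set 'I_v} | #|e| == 2].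

Definition one_factor (v : nat) (F : {set {set 'I_v}}) : Prop :=
  F \subset edgesK v /\ forall x : 'I_v, #|[set e in F | x \in e]| = 1.

(* An h-sun with cycle vertices a_0..a_{h-1} (cycle (a_0,...,a_{h-1}))
   and pendant vertices b_0..b_{h-1}, all 2h vertices distinct. *)
Definition sun_ok (h v : nat) (a b : 'I_h -> 'I_v) : Prop :=
  injective a /\ injective b /\ forall i j, a i != b j.

Definition sun_vertices (h v : nat) (a b : 'I_h -> 'I_v) : {set 'I_v} :=
  [set a i | i : 'I_h] :|: [set b i | i : 'I_h].

Definition sun_edges (h v : nat) (a b : 'I_h -> 'I_v) : {set {set 'I_v}} :=
  [set [set a i; a (ordS i)] | i : 'I_h] :|: [set [set a i; b i] | i : 'I_h].

Definition sun_factor (h v : nat) (C : {set {set 'I_v}}) : Prop :=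
  exists (k : nat) (a b : 'I_k -> 'I_h -> 'I_v),
    (forall j, sun_ok (a j) (b j)) /\
    (forall j1 j2, j1 != j2 -> [disjoint sun_vertices (a j1) (b j1) & sun_vertices (a j2) (b j2)]) /\
    (forall x : 'I_v, exists j, x \in sun_vertices (a j) (b j)) /\
    C = \bigcup_(j < k) sun_edges (a j) (b j).

(* (K_2, S(C_h))-URD(v; r, s): a partition of the edge set of K_v into
   r classes that are 1-factors and s classes that are sun-factors.
   Classes of a partition are nonempty and pairwise disjoint. *)
Definition URD (h v r s : nat) : Prop :=
  exists (F : 'I_r -> {set {set 'I_v}}) (S : 'I_s -> {set {set 'I_v}}),
    (forall i, one_factor (F i)) /\
    (forall j, sun_factor h (S j)) /\
    (forall i, F i != set0) /\ (forall j, S j != set0) /\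
    (forall i1 i2, i1 != i2 -> [disjoint F i1 & F i2]) /\
    (forall j1 j2, j1 != j2 -> [disjoint S j1 & S j2]) /\
    (forall i j, [disjoint F i & S j]) /\
    (\bigcup_(i < r) F i) :|: (\bigcup_(j < s) S j) = edgesK v.

(* In a sun factor of K_v every cycle vertex has degree 3 and every pendant
   vertex degree 1, and there are as many cycle vertices as pendant ones, so
   v is 2h times the number of suns.  Hence a vertex x has degree
   r + s + 2 t(x) in K_v, where t(x) is the number of sun classes in which x
   lies on a cycle; so t is constant, and counting cycle vertices over all
   sun classes gives v t = s v / 2, i.e. s = 2t. *)

From mathcomp Require Import all_boot zify.
Set Implicit Arguments. Unset Strict Implicit. Unset Printing Implicit Defensive.

Lemma card_disjoint_setU (T : finType) (A B : {set T}) :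
  [disjoint A & B] -> #|A :|: B| = #|A| + #|B|.
Proof. by move=> dAB; apply/eqP; rewrite (leq_card_setU A B).2. Qed.

Lemma card_bigcup_disjoint (I T : finType) (F : I -> {set T}) :
  (forall i j, i != j -> [disjoint F i & F j]) ->
  #|\bigcup_i F i| = \sum_i #|F i|.
Proof.
move=> dF; rewrite -sum1_card partition_disjoint_bigcup //.
by apply: eq_bigr => i _; rewrite sum1_card.
Qed.

Lemma card_bigcup_imset (I J T : finType) (f : J -> I -> T) :
  (forall j, injective (f j)) ->
  (forall j1 j2, j1 != j2 -> [disjoint [set f j1 i | i : I] & [set f j2 i | i : I]]) ->
  #|\bigcup_j [set f j i | i : I]| = #|J| * #|I|.
Proof.
move=> inj_f dis; rewrite card_bigcup_disjoint // -sum_nat_const.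
by apply: eq_bigr => j _; rewrite card_imset.
Qed.

Lemma double_counting_mem (I T : finType) (A : I -> {set T}) :
  \sum_(x : T) \sum_i (x \in A i : nat) = \sum_i #|A i|.
Proof.
rewrite exchange_big; apply: eq_bigr => i _.
by rewrite -sum1_card [RHS]big_mkcond; apply: eq_bigr => x _; case: (x \in A i).
Qed.

Definition edge_deg v (C : {set {set 'I_v}}) (x : 'I_v) := #|[set e in C | x \in e]|.

Lemma edge_degE v (C : {set {set 'I_v}}) x : edge_deg C x = \sum_(e in C) (x \in e : nat).
Proof.
rewrite /edge_deg -sum1_card big_mkcond [RHS]big_mkcond; apply: eq_bigr => e _.
by rewrite !inE; case: (e \in C); case: (x \in e).
Qed.

Lemma edge_degU v (C1 C2 : {set {set 'I_v}}) x :
  [disjoint C1 & C2] -> edge_deg (C1 :|: C2) x = edge_deg C1 x + edge_deg C2 x.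
Proof.
by move=> dC; rewrite !edge_degE -bigU //; apply: eq_bigl => e; rewrite !inE.
Qed.

Lemma edge_deg_bigcup (I : finType) v (F : I -> {set {set 'I_v}}) x :
  (forall i j, i != j -> [disjoint F i & F j]) ->
  edge_deg (\bigcup_i F i) x = \sum_i edge_deg (F i) x.
Proof.
move=> dF; rewrite edge_degE partition_disjoint_bigcup //.
by under eq_bigr do rewrite -edge_degE.
Qed.

Lemma edge_deg_K v (x : 'I_v) : edge_deg (edgesK v) x = v.-1.
Proof.
rewrite /edge_deg.
have -> : [set e in edgesK v | x \in e] = [set [set x; y] | y in [set~ x]].
  apply/setP => e; rewrite !inE; apply/andP/imsetP.
  - case => /cards2P [p [q [pq ->]]] /set2P [->|->].
      by exists q; rewrite // !inE eq_sym.
    by exists p; rewrite ?inE // setUC.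
  - case => y; rewrite !inE => yx ->; split; last by rewrite set21.
    by rewrite cards2 (eq_sym x) yx.
rewrite card_in_imset ?cardsC1 ?card_ord // => y z; rewrite !inE => yx zx exy.
have : y \in [set x; z] by rewrite -exy set22.
by rewrite !inE (negbTE yx) => /eqP.
Qed.

Lemma ordS_val h (i : 'I_h) : val (ordS i) = if i.+1 == h then 0 else i.+1.
Proof.
rewrite /=; case: eqP => [->|ne_h]; first by rewrite modnn.
by rewrite modn_small //; have := ltn_ord i; lia.
Qed.

Lemma ordS_neq h (i : 'I_h) : 1 < h -> ordS i != i.
Proof.
move=> h_gt1; apply/eqP => /(congr1 val); rewrite ordS_val.
by have := ltn_ord i; case: eqP => ? /=; lia.
Qed.

Lemma ordSS_neq h (i : 'I_h) : 2 < h -> ordS (ordS i) != i.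
Proof.
move=> h_gt2; apply/eqP => /(congr1 val); rewrite !ordS_val.
by have := ltn_ord i; case: (i.+1 =P h) => ? /=; case: ifP => /eqP ? /=; lia.
Qed.

Lemma cards3 (T : finType) (p q r : T) :
  p != q -> p != r -> q != r -> #|[set p; q; r]| = 3.
Proof.
move=> pq pr qr; rewrite setUC cardsU1 cards2 pq !inE.
by rewrite eq_sym (negbTE pr) eq_sym (negbTE qr).
Qed.

Section Sun.
Variables (h v : nat) (a b : 'I_h -> 'I_v).
Hypothesis h_gt2 : 2 < h.
Hypothesis ab_ok : sun_ok a b.

Lemma sun_edge_subset e : e \in sun_edges a b -> e \subset sun_vertices a b.
Proof.
rewrite inE => /orP[] /imsetP [i _ ->]; apply/subsetP => y; rewrite !inE;
  by case/orP => /eqP ->; rewrite ?imset_f ?orbT.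
Qed.

Lemma edge_deg_sun_cycle i : edge_deg (sun_edges a b) (a i) = 3.
Proof.
rewrite /edge_deg; case: ab_ok => inj_a [_ ab].
have -> : [set e in sun_edges a b | a i \in e] =
   [set [set a (ord_pred i); a i]; [set a i; a (ordS i)]; [set a i; b i]].
  apply/setP => e; rewrite !inE; apply/idP/idP.
  - case/andP => /orP[] /imsetP [j _ ->]; rewrite !inE => /orP[] /eqP /=.
    + by move/inj_a ->; rewrite eqxx orbT.
    + by move/inj_a ->; rewrite ordSK eqxx.
    + by move/inj_a ->; rewrite eqxx !orbT.
    + by move=> aib; move: (ab i j); rewrite aib eqxx.
  - case/orP => [/orP[]|] /eqP ->; rewrite !inE ?eqxx ?orbT ?andbT.
    + by apply/orP; left; apply/imsetP; exists (ord_pred i); rewrite ?ord_predK.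
    + by apply/orP; left; apply/imsetP; exists i.
    + by apply/orP; right; apply/imsetP; exists i.
apply: cards3.
- apply/eqP => e; have : a (ord_pred i) \in [set a i; a (ordS i)] by rewrite -e set21.
  rewrite !inE => /orP[] /eqP /inj_a e2.
  + by have := ordS_neq i (ltnW h_gt2); rewrite -{1}e2 ord_predK eqxx.
  + by have := ordSS_neq i h_gt2; rewrite -e2 ord_predK eqxx.
- apply/eqP => e; have : b i \in [set a (ord_pred i); a i] by rewrite e set22.
  by rewrite !inE => /orP[] /eqP e2; [move: (ab (ord_pred i) i) | move: (ab i i)]; rewrite e2 eqxx.
- apply/eqP => e; have : b i \in [set a i; a (ordS i)] by rewrite e set22.
  by rewrite !inE => /orP[] /eqP e2; [move: (ab i i) | move: (ab (ordS i) i)]; rewrite e2 eqxx.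
Qed.

Lemma edge_deg_sun_pendant i : edge_deg (sun_edges a b) (b i) = 1.
Proof.
rewrite /edge_deg; case: ab_ok => _ [inj_b ab].
have -> : [set e in sun_edges a b | b i \in e] = [set [set a i; b i]].
  apply/setP => e; rewrite !inE; apply/idP/idP.
  - case/andP => /orP[] /imsetP [j _ ->]; rewrite !inE => /orP[] /eqP /=.
    + by move=> bia; move: (ab j i); rewrite bia eqxx.
    + by move=> bia; move: (ab (ordS j) i); rewrite bia eqxx.
    + by move=> bia; move: (ab j i); rewrite bia eqxx.
    + by move/inj_b ->.
  - move/eqP ->; rewrite !inE eqxx orbT andbT.
    by apply/orP; right; apply/imsetP; exists i.
by rewrite cards1.
Qed.
End Sun.

Section SunFactor.
Variables (h v k : nat) (a b : 'I_k -> 'I_h -> 'I_v).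
Hypothesis h_gt2 : 2 < h.
Hypothesis suns_ok : forall j, sun_ok (a j) (b j).
Hypothesis suns_disjoint : forall j1 j2, j1 != j2 ->
  [disjoint sun_vertices (a j1) (b j1) & sun_vertices (a j2) (b j2)].
Hypothesis suns_cover : forall x : 'I_v, exists j, x \in sun_vertices (a j) (b j).

Let cycle_part := \bigcup_j [set a j i | i : 'I_h].
Let pendant_part := \bigcup_j [set b j i | i : 'I_h].

Lemma sun_index_unique j1 j2 x :
  x \in sun_vertices (a j1) (b j1) -> x \in sun_vertices (a j2) (b j2) -> j1 = j2.
Proof.
move=> x1 x2; case: (eqVneq j1 j2) => // /suns_disjoint /disjointFr /(_ x1).
by rewrite x2.
Qed.

Lemma card_cycle_part : #|cycle_part| = k * h.
Proof.
rewrite card_bigcup_imset ?card_ord // => [j|j1 j2 /suns_disjoint].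
  by case: (suns_ok j).
by apply: disjointW; apply: subsetUl.
Qed.

Lemma card_pendant_part : #|pendant_part| = k * h.
Proof.
rewrite card_bigcup_imset ?card_ord // => [j|j1 j2 /suns_disjoint].
  by case: (suns_ok j) => _ [].
by apply: disjointW; apply: subsetUr.
Qed.

Lemma cycle_pendant_disjoint : [disjoint cycle_part & pendant_part].
Proof.
apply/pred0P => x /=; apply/negP => /andP[].
move=> /bigcupP[j1 _ /imsetP[i _ ->]] /bigcupP[j2 _ /imsetP[i' _ ab]].
have j12 : j1 = j2.
  apply: (@sun_index_unique _ _ (a j1 i)); rewrite inE; last rewrite ab.
    by rewrite imset_f.
  by rewrite imset_f ?orbT.
by case: (suns_ok j1) => _ [_ /(_ i i')]; rewrite ab j12 eqxx.
Qed.

Lemma cycle_pendant_cover : cycle_part :|: pendant_part = setT.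
Proof.
apply/setP => x; rewrite !inE; have [j] := suns_cover x.
by rewrite inE => /orP[] xj; apply/orP; [left|right]; apply/bigcupP; exists j.
Qed.

Lemma sun_factor_order : v = (k * h).*2.
Proof.
rewrite -addnn -{1}card_cycle_part -card_pendant_part.
by rewrite -card_disjoint_setU ?cycle_pendant_disjoint // cycle_pendant_cover cardsT card_ord.
Qed.

Lemma edge_deg_suns x :
  edge_deg (\bigcup_j sun_edges (a j) (b j)) x = (x \in cycle_part).*2.+1.
Proof.
have [j0 xj0] := suns_cover x.
have -> : edge_deg (\bigcup_j sun_edges (a j) (b j)) x = edge_deg (sun_edges (a j0) (b j0)) x.
  apply: eq_card => e; rewrite [LHS]inE [RHS]inE.
  apply/andP/andP => [[/bigcupP[j _ ej] xe]|[ej0 xe]].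
    by rewrite -(sun_index_unique (subsetP (sun_edge_subset ej) _ xe) xj0).
  by split=> //; apply/bigcupP; exists j0.
move: xj0; rewrite inE => /orP[] /imsetP[i _ ->].
  rewrite edge_deg_sun_cycle // (_ : a j0 i \in cycle_part) //.
  by apply/bigcupP; exists j0; rewrite ?imset_f.
rewrite edge_deg_sun_pendant // (disjointFl cycle_pendant_disjoint) //.
by apply/bigcupP; exists j0; rewrite ?imset_f.
Qed.
End SunFactor.

Definition cycle_vertices v (C : {set {set 'I_v}}) := [set x | edge_deg C x == 3].

Lemma sun_factor_degrees h v (C : {set {set 'I_v}}) : 2 < h -> sun_factor h C ->
  [/\ 2 * h %| v, #|cycle_vertices C|.*2 = v
    & forall x, edge_deg C x = (x \in cycle_vertices C).*2.+1].
Proof.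
move=> h_gt2 [k [a [b [ok [dis [cov ->]]]]]].
have deg_suns := edge_deg_suns h_gt2 ok dis cov.
have -> : cycle_vertices (\bigcup_j sun_edges (a j) (b j)) = \bigcup_j [set a j i | i : 'I_h].
  by apply/setP => x; rewrite [LHS]inE deg_suns; case: (x \in _).
have order := sun_factor_order ok dis cov.
split => //; first by apply/dvdnP; exists k; rewrite order; lia.
by rewrite (card_cycle_part ok dis) order.
Qed.

Section URDCounting.
Variables (h v r s : nat) (F : 'I_r -> {set {set 'I_v}}) (S : 'I_s -> {set {set 'I_v}}).
Hypothesis h_gt2 : 2 < h.
Hypothesis F_one_factor : forall i, one_factor (F i).
Hypothesis S_sun_factor : forall j, sun_factor h (S j).
Hypothesis F_disjoint : forall i1 i2, i1 != i2 -> [disjoint F i1 & F i2].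
Hypothesis S_disjoint : forall j1 j2, j1 != j2 -> [disjoint S j1 & S j2].
Hypothesis FS_disjoint : forall i j, [disjoint F i & S j].
Hypothesis FS_cover : (\bigcup_(i < r) F i) :|: (\bigcup_(j < s) S j) = edgesK v.

Definition cycle_count (x : 'I_v) := \sum_j (x \in cycle_vertices (S j) : nat).

Lemma edge_deg_URD x : v.-1 = r + s + (cycle_count x).*2.
Proof.
rewrite -(edge_deg_K x) -FS_cover edge_degU; last first.
  rewrite disjoint_sym; apply: bigcup_disjoint => j _.
  by rewrite disjoint_sym; apply: bigcup_disjoint => i _; apply: FS_disjoint.
rewrite !edge_deg_bigcup // -addnA; congr (_ + _).
  rewrite (eq_bigr (fun _ => 1)) => [|i _]; last exact: (F_one_factor i).2.
  by rewrite sum_nat_const card_ord muln1.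
rewrite (eq_bigr (fun j => 1 + (x \in cycle_vertices (S j)) * 2)) => [|j _]; last first.
  by have [_ _ ->] := sun_factor_degrees h_gt2 (S_sun_factor j); rewrite add1n muln2.
by rewrite big_split sum_nat_const card_ord muln1 -big_distrl /= muln2.
Qed.

Lemma sum_cycle_count : (\sum_x cycle_count x).*2 = s * v.
Proof.
rewrite double_counting_mem -muln2 big_distrl /=.
rewrite (eq_bigr (fun _ => v)) ?sum_nat_const ?card_ord // => j _.
by have [_ cyc_j _] := sun_factor_degrees h_gt2 (S_sun_factor j); rewrite muln2 cyc_j.
Qed.

Lemma URD_sun_classes_even x : 0 < v -> s = (cycle_count x).*2.
Proof.
move=> v_gt0; have const y : cycle_count y = cycle_count x.
  by have := edge_deg_URD x; have := edge_deg_URD y; lia.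
apply/eqP; rewrite -(eqn_pmul2l v_gt0) -doubleMr mulnC -sum_cycle_count.
by rewrite (eq_bigr (fun _ => cycle_count x)) // sum_nat_const card_ord.
Qed.
End URDCounting.

Theorem lemma2p1 (h v r s : nat) :
  3 <= h -> 0 < s -> URD h v r s ->
  v = 0 %[mod 2 * h] /\ s = 0 %[mod 2].
Proof.
move=> h_ge3 s_gt0 [F [S [hF [hS [_ [S0 [dF [dS [dFS cover]]]]]]]]].
pose j0 : 'I_s := Ordinal s_gt0.
have [dvd_v _ _] := sun_factor_degrees h_ge3 (hS j0).
split; first by rewrite mod0n; apply/eqP.
have v_gt0 : 0 < v.
  have [e eS] := set0Pn _ (S0 j0).
  have : e \in edgesK v by rewrite -cover inE; apply/orP; right; apply/bigcupP; exists j0.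
  by rewrite inE => /eqP e2; have := max_card e; rewrite e2 card_ord; lia.
rewrite (URD_sun_classes_even h_ge3 hF hS dF dS dFS cover (Ordinal v_gt0) v_gt0).
by rewrite -muln2 modnMl.
Qed.
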